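(* For all positive integers $d\le m$, $r$ and every $\varepsilon>0$, $$\mathbf{n}_\infty(d,m,r,\varepsilon)\le\mathbf{GR}\Big(\big\lfloor(1+4\varepsilon^{-1})^d\big\rfloor,\ \big\lfloor(1+4\varepsilon^{-1})^d\big\rfloor\,2^d\,\frac{m!}{(m-d)!},\ r\Big).$$
   Context: Spaces are real. $\ell_\infty^k=(\mathbb{R}^k,\|\cdot\|_\infty)$. $\mathrm{Emb}(\ell_\infty^a,\ell_\infty^b)$ is the set of linear isometric embeddings, with the operator-norm metric. An $r$-coloring is a map into $\{0,\dots,r-1\}$; a subset $F$ of the colored space $M$ is $\varepsilon$-monochromatic if for some color $i$ every element of $F$ is within distance $\varepsilon$ of an element of $M$ of color $i$. $\mathbf{n}_\infty(d,m,r,\varepsilon)$ is the least $n$ such that every $r$-coloring of $\mathrm{Emb}(\ell_\infty^d,\ell_\infty^n)$ has an $\varepsilon$-monochromatic set of the form $\gamma\circ\mathrm{Emb}(\ell_\infty^d,\ell_\infty^m)$ for some $\gamma\in\mathrm{Emb}(\ell_\infty^m,\ell_\infty^n)$. For finite linear orders $R,S$, a rigid surjection $f:R\to S$ is a surjection with $\min f^{-1}(s_0)<\min f^{-1}(s_1)$ whenever $s_0<s_1$; $\mathrm{Epi}(R,S)$ is the set of rigid surjections, and integers are naturally ordered as $\{0,\dots,a-1\}$. $\mathbf{GR}(a,b,r)$ is the least $n$ such that every $r$-coloring of $\mathrm{Epi}(n,a)$ is constant on a set of the form $\mathrm{Epi}(b,a)\circ\gamma$ for some $\gamma\in\mathrm{Epi}(n,b)$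 (Dual Ramsey Theorem of Graham–Rothschild). *)

From mathcomp Require Import all_boot all_order all_algebra.
From mathcomp Require Import all_classical all_reals.
Set Implicit Arguments. Unset Strict Implicit. Unset Printing Implicit Defensive.
Import Order.TTheory GRing.Theory Num.Theory.
Local Open Scope ring_scope.
Local Open Scope classical_set_scope.

(* Vectors of l_infty^k are row vectors 'rV[R]_k; a linear map l_infty^a -> l_infty^b
   is a matrix A : 'M[R]_(a,b) acting by x |-> x *m A.  Composition gamma \o phi
   (phi : a -> b, gamma : b -> c) is the matrix phi *m gamma. *)

Definition supnorm (R : realType) (k : nat) (x : 'rV[R]_k) : R :=
  \big[Num.max/0]_(i < k) `|x 0 i|.

Definition isEmb (R : realType) (a b : nat) (A : 'M[R]_(a, b)) : Prop :=
  forall x : 'rV[R]_a, supnorm (x *m A) = supnorm x.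

Definition opnorm (R : realType) (a b : nat) (A : 'M[R]_(a, b)) : R :=
  sup [set supnorm (x *m A) | x in [set x : 'rV[R]_a | supnorm x <= 1]].

(* The Ramsey property defining n_infty(d,m,r,eps): every r-coloring of Emb(d,n)
   has an eps-monochromatic set gamma \o Emb(d,m), gamma in Emb(m,n).
   A coloring is any map c on matrices whose values on embeddings lie in {0..r-1}
   (its values on non-embeddings are irrelevant). *)
Definition EmbRamsey (R : realType) (d m r : nat) (eps : R) (n : nat) : Prop :=
  forall c : 'M[R]_(d, n) -> nat,
    (forall A, isEmb A -> (c A < r)%N) ->
    exists2 gamma : 'M[R]_(m, n), isEmb gamma &
      exists2 i : nat, (i < r)%N &
        forall phi : 'M[R]_(d, m), isEmb phi ->
          exists2 psi : 'M[R]_(d, n), isEmb psi /\ c psi = i &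
            opnorm (phi *m gamma - psi) <= eps.

(* least element of the preimage f^{-1}(s) (n if empty) *)
Definition minpre (n a : nat) (f : {ffun 'I_n -> 'I_a}) (s : 'I_a) : nat :=
  \big[minn/n]_(i < n | f i == s) (i : nat).

Definition rigid_surj (n a : nat) (f : {ffun 'I_n -> 'I_a}) : Prop :=
  (forall s : 'I_a, exists i, f i = s) /\
  (forall s0 s1 : 'I_a, (s0 < s1)%N -> (minpre f s0 < minpre f s1)%N).

Definition compf (n b a : nat) (f : {ffun 'I_b -> 'I_a}) (g : {ffun 'I_n -> 'I_b})
  : {ffun 'I_n -> 'I_a} := [ffun i => f (g i)].

Definition GRprop (a b r n : nat) : Prop :=
  forall c : {ffun 'I_n -> 'I_a} -> nat,
    (forall f, rigid_surj f -> (c f < r)%N) ->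
    exists2 gamma : {ffun 'I_n -> 'I_b}, rigid_surj gamma &
      exists i : nat, forall f : {ffun 'I_b -> 'I_a}, rigid_surj f ->
        c (compf f gamma) = i.

Definition isGR (a b r N : nat) : Prop :=
  GRprop a b r N /\ forall M, (M < N)%N -> ~ GRprop a b r M.

From mathcomp Require Import all_boot all_order all_algebra.
From mathcomp Require Import all_classical all_reals.
From mathcomp Require Import ring lra zify.
From mathcomp Require Import fingroup perm.
Set Implicit Arguments. Unset Strict Implicit. Unset Printing Implicit Defensive.
Import Order.TTheory GRing.Theory Num.Theory.

(* Let p_0, ..., p_(k-1) be an ordered eps-net of the unit ball of l_1^d: it
   contains 0 and the unit vectors, and every y with |y| <= |p_l| is eps-close
   to some p_l' with l' <= l.  Such a net is built greedily from a maximal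
   eps/2-separated set sorted by norm, and the packing bound (counted with
   lattice points) shows it fits in k = floor((1 + 4/eps)^d) points.
   The columns of an isometric embedding l_infty^d -> l_infty^n lie in the unit
   ball of l_1^d and contain every +-e_i, so each rigid surjection f : n -> k
   gives an embedding with columns p_f(j).  Index b = k 2^d m!/(m-d)! by pairs
   (level l, signed injection s : d -> m) and let G : l_infty^m -> l_infty^b have
   column (l, s) equal to p_l placed at the coordinates s with signs.  For
   phi in Emb(d, m), the columns of phi G have norm at most |p_l|, and equal p_l
   exactly at the signed injection inverted by phi; approximating them by net
   points of lower level gives a rigid surjection b -> k whose embedding is
   eps-close to phi G.  Colouring Epi(N, k) through the embeddings and taking
   gamma from the dual Ramsey theorem, G gamma witnesses the Ramsey property.
   For eps > 2 any two embeddings are eps-close. *)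

(** * Lattice points in l_1 balls *)

Definition int_interval (n : nat) : seq int :=
  map Posz (iota 0 n.+1) ++ map Negz (iota 0 n).

Fixpoint lattice_ball (d n : nat) : seq (seq int) :=
  if d is d'.+1 then
    [seq t :: z | t <- int_interval n, z <- lattice_ball d' (n - absz t)]
  else [:: [::]].

Definition normz1 (z : seq int) : nat := sumn (map absz z).

Definition lattice_count (d n : nat) : nat := size (lattice_ball d n).

Lemma mem_int_interval n t : (t \in int_interval n) = (absz t <= n).
Proof.
rewrite mem_cat; case: t => k.
  rewrite (mem_map (can_inj absz_nat)) mem_iota ltnS orbC.
  by case: mapP => // -[].
rewrite (mem_map (_ : injective Negz)); last by move=> ? ? [].
by rewrite mem_iota; case: mapP => // -[].
Qed.

Lemma uniq_int_interval n : uniq (int_interval n).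
Proof.
rewrite cat_uniq (map_inj_uniq (can_inj absz_nat)) iota_uniq.
rewrite (map_inj_uniq (_ : injective Negz)) ?iota_uniq ?andbT; last by move=> ? ? [].
by apply/hasPn => _ /mapP [k _ ->]; apply/mapP => -[].
Qed.

Lemma mem_lattice_ball d n z :
  (z \in lattice_ball d n) = (size z == d) && (normz1 z <= n).
Proof.
elim: d n z => [|d IH] n z; first by case: z.
apply/allpairsPdep/idP => [[t [z' [tn]]]|].
  rewrite mem_int_interval in tn; rewrite IH => /andP [/eqP <- hz] ->.
  by rewrite /= eqxx /normz1 /= -(subnKC tn) leq_add2l.
case: z => [//|t z] /andP [hs hn]; exists t, z.
have tn : absz t <= n by apply: leq_trans hn; apply: leq_addr.
by rewrite mem_int_interval IH -eqSS hs leq_subRL.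
Qed.

Lemma uniq_lattice_ball d n : uniq (lattice_ball d n).
Proof.
elim: d n => [|d IH] n //.
apply: allpairs_uniq_dep => [|t _|]; [exact: uniq_int_interval | exact: IH |].
by move=> [x y] [x' y'] _ _ /= [-> ->].
Qed.

Lemma lattice_count_rec d n :
  lattice_count d.+1 n = \sum_(j < n.+1) lattice_count d j + \sum_(j < n) lattice_count d j.
Proof.
have rev_sum k : sumn [seq lattice_count d (k - x.+1) | x <- iota 0 k] =
                 \sum_(j < k) lattice_count d j.
  rewrite sumnE big_map -(big_mkord xpredT) big_nat_rev /index_iota subn0.
  by apply: eq_bigr => i _; rewrite add0n.
rewrite /lattice_count size_allpairs_dep map_cat sumn_cat -!map_comp -!rev_sum.
by congr (sumn _ + sumn _); apply: eq_map => k /=; rewrite ?subSS.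
Qed.

Lemma sum_binomS d n : \sum_(j < n.+1) 'C(j + d, d) = 'C(n + d.+1, d.+1).
Proof.
elim: n => [|n IH]; first by rewrite big_ord1 add0n !binn.
by rewrite big_ord_recr /= IH [in RHS]addSn binS addSnnS.
Qed.

Lemma sum_binom d n : \sum_(j < n) 'C(j, d) = 'C(n, d.+1).
Proof.
elim: n => [|n IH]; first by rewrite big_ord0.
by rewrite big_ord_recr /= IH binS.
Qed.

Lemma lattice_count_le d n : lattice_count d n <= 2 ^ d * 'C(n + d, d).
Proof.
elim: d n => [|d IH] n; first by rewrite bin0.
rewrite lattice_count_rec expnS -mulnA mul2n -addnn -sum_binomS big_distrr /=.
have le_sum k : \sum_(j < k) lattice_count d j <= \sum_(j < k) 2 ^ d * 'C(j + d, d).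
  by apply: leq_sum => j _; apply: IH.
apply: leq_add; first exact: le_sum.
by apply: leq_trans (le_sum n) _; rewrite big_ord_recr leq_addr.
Qed.

Lemma lattice_count_ge d n : 2 ^ d * 'C(n, d) <= lattice_count d n.
Proof.
elim: d n => [|d IH] n; first by rewrite bin0.
rewrite lattice_count_rec expnS -mulnA -sum_binom big_distrr /= mul2n -addnn.
have le_sum k : \sum_(j < k) 2 ^ d * 'C(j, d) <= \sum_(j < k) lattice_count d j.
  by apply: leq_sum => j _; apply: IH.
apply: leq_add; last exact: le_sum.
by apply: leq_trans (le_sum n.+1); rewrite big_ord_recr leq_addr.
Qed.

Definition addz_seq (c z : seq int) : seq int := [seq x.1 + x.2 | x <- zip c z]%R.
Definition subz_seq (c z : seq int) : seq int := [seq x.1 - x.2 | x <- zip c z]%R.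

Lemma abszD_le (a b : int) : absz (a + b)%R <= absz a + absz b.
Proof. by rewrite -lez_nat PoszD !abszE; exact: ler_normD. Qed.

Lemma size_addz_seq c z : size c = size z -> size (addz_seq c z) = size z.
Proof. by move=> h; rewrite size_map size_zip h minnn. Qed.

Lemma normz1_addz_seq c z : normz1 (addz_seq c z) <= normz1 c + normz1 z.
Proof.
elim: c z => [|a c IH] [|b z] //=.
by rewrite addnACA; apply: leq_add; [exact: abszD_le | exact: IH].
Qed.

Lemma addz_seq_inj c z z' : size z = size c -> size z' = size c ->
  addz_seq c z = addz_seq c z' -> z = z'.
Proof.
elim: c z z' => [|a c IH] [|b z] [|b' z'] //= [hz] [hz'] [/addrI -> e].
by rewrite (IH _ _ hz hz' e).
Qed.

Lemma addz_seq_collide c c' z z' : addz_seq c z = addz_seq c' z' ->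
  size z = size c -> size z' = size c -> size c' = size c ->
  normz1 (subz_seq c c') <= normz1 z + normz1 z'.
Proof.
elim: c c' z z' => [|a c IH] [|a' c'] [|b z] [|b' z'] //= [e1 e2] [hz] [hz'] [hc].
rewrite addnACA; apply: leq_add; last exact: IH.
have -> : (a - a' = b' - b)%R by rewrite -(addrK b a) e1; ring.
by apply: leq_trans (abszD_le _ _) _; rewrite abszN addnC.
Qed.

Lemma expn_sub_le_ffact n m : (n - m) ^ m <= n ^_ m.
Proof.
rewrite ffact_prod -[X in X <= _]iter_muln_1 -big_const_ord.
by apply: leq_prod => i _; apply: leq_sub2l; exact: ltnW.
Qed.

Lemma ffact_le_expn n m : n ^_ m <= n ^ m.
Proof.
rewrite ffact_prod -[X in _ <= X]iter_muln_1 -big_const_ord.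
by apply: leq_prod => i _; apply: leq_subr.
Qed.

Section LatticePacking.
Variables (T : eqType) (S : seq T) (cen : T -> seq int) (d rho sigma : nat).
Hypotheses (uniqS : uniq S) (size_cen : forall s, s \in S -> size (cen s) = d)
  (cen_sep : forall s s', s \in S -> s' \in S -> s != s' ->
     2 * rho < normz1 (subz_seq (cen s) (cen s')))
  (cen_norm : forall s, s \in S -> normz1 (cen s) + rho <= sigma).

(* The lattice balls of radius [rho] around the centers are disjoint and lie
   in the ball of radius [sigma]. *)
Lemma lattice_packing : size S * lattice_count d rho <= lattice_count d sigma.
Proof.
pose L := [seq addz_seq (cen s) z | s <- S, z <- lattice_ball d rho].
have uL : uniq L.
  apply: allpairs_uniq => //; first exact: uniq_lattice_ball.
  move=> _ _ /allpairsP [[s z] [/= sS zb ->]] /allpairsP [[s' z'] [/= s'S z'b ->]] /= e.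
  move: zb z'b; rewrite !mem_lattice_ball => /andP [/eqP hz nz] /andP [/eqP hz' nz'].
  have [es | ne] := eqVneq s s'.
    by subst s'; rewrite (addz_seq_inj _ _ e) ?size_cen.
  have := addz_seq_collide e; rewrite !size_cen // => /(_ hz hz' erefl) hle.
  have := leq_trans (cen_sep sS s'S ne) hle.
  by rewrite mul2n -addnn ltnNge leq_add.
rewrite /lattice_count -(size_allpairs (fun s z => addz_seq (cen s) z)) -/L.
apply: uniq_leq_size => // _ /allpairsP [[s z] [/= sS zb ->]].
move: zb; rewrite !mem_lattice_ball => /andP [/eqP hz nz].
rewrite size_addz_seq ?hz ?size_cen //= eqxx.
apply: leq_trans (normz1_addz_seq _ _) _; apply: leq_trans (cen_norm sS).
by rewrite leq_add2l.
Qed.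

Lemma lattice_packing_expn : size S * (rho - d) ^ d <= (sigma + d) ^ d.
Proof.
have hbin : size S * 'C(rho, d) <= 'C(sigma + d, d).
  rewrite -(@leq_pmul2l (2 ^ d)) ?expn_gt0 // mulnCA.
  apply: leq_trans (lattice_count_le _ _); apply: leq_trans lattice_packing.
  by rewrite leq_mul2l lattice_count_ge orbT.
have := leq_mul hbin (leqnn d`!); rewrite -mulnA !bin_ffact => hff.
apply: leq_trans (ffact_le_expn _ _); apply: leq_trans hff.
by rewrite leq_mul2l expn_sub_le_ffact orbT.
Qed.

End LatticePacking.

(** * Rigid surjections *)

Lemma minpre_le (n a : nat) (f : {ffun 'I_n -> 'I_a}) s (t : 'I_n) :
  f t = s -> minpre f s <= t.
Proof.
move=> fts; rewrite /minpre; have : t \in index_enum 'I_n by rewrite mem_index_enum.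
elim: (index_enum _) => // t' e IH; rewrite inE big_cons => /predU1P [<- | te].
  by rewrite fts eqxx geq_minl.
by case: ifP => _; [apply: leq_trans (geq_minr _ _) (IH te) | exact: IH].
Qed.

Lemma minpre_ge (n a : nat) (f : {ffun 'I_n -> 'I_a}) s c :
  c <= n -> (forall t : 'I_n, f t = s -> c <= t) -> c <= minpre f s.
Proof.
move=> cn hc; rewrite /minpre; elim/big_ind: _ => // [x y cx cy | t /eqP].
  by rewrite leq_min cx cy.
exact: hc.
Qed.

Lemma compf_surj (n b a : nat) (f : {ffun 'I_b -> 'I_a}) (g : {ffun 'I_n -> 'I_b}) :
  rigid_surj f -> rigid_surj g -> forall l, exists j, compf f g j = l.
Proof.
move=> [fS _] [gS _] l; have [t ft] := fS l; have [j gj] := gS t.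
by exists j; rewrite ffunE gj.
Qed.

Section Blocks.
Variables K P : nat.

Lemma block_size_gt0 (t : 'I_(K * P)) : 0 < P.
Proof. by case: P t => // -[t]; rewrite muln0. Qed.

Lemma block_subproof (t : 'I_(K * P)) : t %/ P < K.
Proof. by rewrite ltn_divLR ?ltn_ord // (block_size_gt0 t). Qed.

Lemma offset_subproof (t : 'I_(K * P)) : t %% P < P.
Proof. by rewrite ltn_mod (block_size_gt0 t). Qed.

Definition block (t : 'I_(K * P)) : 'I_K := Ordinal (block_subproof t).
Definition offset (t : 'I_(K * P)) : 'I_P := Ordinal (offset_subproof t).

Lemma in_block_subproof (l : 'I_K) (pi : 'I_P) : l * P + pi < K * P.
Proof.
apply: leq_trans (_ : l.+1 * P <= _); last by rewrite leq_mul2r ltn_ord orbT.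
by rewrite mulSn addnC ltn_add2r.
Qed.

Definition in_block (l : 'I_K) (pi : 'I_P) : 'I_(K * P) := Ordinal (in_block_subproof l pi).

Lemma block_in_block l pi : block (in_block l pi) = l.
Proof.
by apply: val_inj; rewrite /= divnMDl ?divn_small ?addn0 // (leq_ltn_trans _ (ltn_ord pi)).
Qed.

Lemma offset_in_block l pi : offset (in_block l pi) = pi.
Proof. by apply: val_inj; rewrite /= modnMDl modn_small. Qed.

(* The first occurrence of level [l] lies in block [l], so levels first occur
   in increasing order. *)
Lemma rigid_surj_of_blocks (f : {ffun 'I_(K * P) -> 'I_K}) :
  (forall t, f t <= block t) -> (forall l, exists pi, f (in_block l pi) = l) -> rigid_surj f.
Proof.
move=> f_le f_onto.
have minpre_block (l : 'I_K) : l * P <= minpre f l < l.+1 * P.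
  have [pi fl] := f_onto l; apply/andP; split.
    apply: minpre_ge => [|t ftl]; first by rewrite leq_mul2r ltnW ?orbT.
    by rewrite -leq_divRL ?(block_size_gt0 t) // -ftl f_le.
  by apply: leq_ltn_trans (minpre_le fl) _; rewrite /= mulSn addnC ltn_add2r.
split=> [l|l0 l1 l01]; first by have [pi fl] := f_onto l; exists (in_block l pi).
have /andP [_ h0] := minpre_block l0; have /andP [h1 _] := minpre_block l1.
by apply: leq_trans h0 (leq_trans _ h1); rewrite leq_mul2r l01 orbT.
Qed.

End Blocks.

Lemma GRprop_size_le (a b r n : nat) : 0 < r -> GRprop a b r n -> b <= n.
Proof.
move=> r_gt0 /(_ (fun=> 0) (fun _ _ => r_gt0)) [gamma [gamma_onto _] _].
have [h hK] := fin_all_exists gamma_onto.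
have h_inj : injective h by move=> x y hxy; rewrite -(hK x) -(hK y) hxy.
by have := leq_card h h_inj; rewrite !card_ord.
Qed.

Local Open Scope ring_scope.

(** * Packing and nets in the unit ball of l_1^d *)

Section L1Packing.
Variable R : realType.

Definition l1norm (d : nat) (v : 'I_d -> R) : R := \sum_i `|v i|.
Definition l1dist (d : nat) (u v : 'I_d -> R) : R := \sum_i `|u i - v i|.

Lemma exprD_le (q eta : R) d : 0 <= q -> 0 <= eta <= 1 ->
  (q + eta) ^+ d <= q ^+ d + eta * (d%:R * (q + 1) ^+ d).
Proof.
move=> q0 /andP [e0 e1].
rewrite -lerBlDl subrXX (addrC (q + eta)) addKr ler_wpM2l //.
have -> : d%:R * (q + 1) ^+ d = \sum_(i < d) (q + 1) ^+ d.
  by rewrite sumr_const card_ord mulr_natl.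
apply: ler_sum => i _.
have q1 : 1 <= q + 1 by lra.
apply: (@le_trans _ _ ((q + 1) ^+ (d.-1 - i) * (q + 1) ^+ i)).
  by apply: ler_pM; rewrite ?exprn_ge0 ?lerXn2r ?nnegrE //; lra.
by rewrite -exprD; apply: ler_weXn2l => //; have := ltn_ord i; lia.
Qed.

Lemma le_expr_of_affine_bound (q C a : R) d : 0 <= q -> 0 <= C ->
  (forall X : nat, (0 < X)%N -> a * X%:R ^+ d <= (q * X%:R + C) ^+ d) -> a <= q ^+ d.
Proof.
move=> q0 C0 hX; rewrite leNgt; apply/negP => hlt.
set D := a - q ^+ d; set M := d%:R * (q + 1) ^+ d.
have D0 : 0 < D by rewrite subr_gt0.
have M0 : 0 <= M by rewrite mulr_ge0 ?exprn_ge0 //; lra.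
have CMD : 0 <= C * M / D by apply: divr_ge0; [exact: mulr_ge0 | exact: ltW].
have B0 : 0 <= C * M / D + C by lra.
set X := (Num.truncn (C * M / D + C)).+1.
have /andP [_ hXB] := truncn_itv B0; rewrite -/X in hXB.
have X0 : 0 < X%:R :> R by rewrite ltr0n.
have CX : 0 <= C / X%:R <= 1.
  by rewrite divr_ge0 ?(ltW X0) //= ler_pdivrMr // mul1r; lra.
have := hX X isT.
have -> : q * X%:R + C = (q + C / X%:R) * X%:R by rewrite mulrDl divfK ?gt_eqF.
rewrite exprMn ler_pM2r ?exprn_gt0 // => haX.
have := le_trans haX (exprD_le d q0 CX).
rewrite -lerBlDl -/D -/M mulrAC ler_pdivlMr // => hDX.
have : C * M < D * X%:R by rewrite mulrC -ltr_pdivrMl //; lra.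
by rewrite ltNge hDX.
Qed.

Lemma floor_dist_ge (a b : R) :
  `|a - b| - 1 <= `|((Num.floor a - Num.floor b)%:~R : R)|.
Proof.
have /andP [ha1 ha2] := floor_itv a; have /andP [hb1 hb2] := floor_itv b.
move: ha2 hb2; rewrite intrB !intrD.
set u : R := (Num.floor a)%:~R; set v : R := (Num.floor b)%:~R.
rewrite lerBlDr ler_norml.
have := ler_norm (u - v); have := ler_norm (v - u); rewrite distrC; lra.
Qed.

Lemma floor_norm_le (a : R) : `|((Num.floor a)%:~R : R)| <= `|a| + 1.
Proof.
have /andP [h1 h2] := floor_itv a; rewrite intrD in h2.
have := ler_norm a; have := ler_norm (- a); rewrite normrN.
rewrite ler_norml; lra.
Qed.

Lemma natr_normz1 (e : seq int) : (normz1 e)%:R = \sum_(z <- e) `|z%:~R : R|.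
Proof.
elim: e => [|z e IH]; first by rewrite big_nil.
by rewrite big_cons /= natrD IH natr_absz intr_norm.
Qed.

Lemma subz_seq_map (I : Type) (f g : I -> int) (e : seq I) :
  subz_seq (map f e) (map g e) = map (fun x => f x - g x) e.
Proof. by rewrite /subz_seq; elim: e => //= x e ->. Qed.

Definition floor_scale (d : nat) (L : R) (v : 'I_d -> R) : seq int :=
  [seq Num.floor (L * v i) | i <- enum 'I_d].

Lemma size_floor_scale d L (v : 'I_d -> R) : size (floor_scale L v) = d.
Proof. by rewrite size_map size_enum_ord. Qed.

Lemma floor_scale_dist d (L : R) (u v : 'I_d -> R) : 0 <= L ->
  L * l1dist u v - d%:R <= (normz1 (subz_seq (floor_scale L u) (floor_scale L v)))%:R.
Proof.
move=> L0; rewrite /floor_scale subz_seq_map natr_normz1 big_map big_enum /=.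
apply: le_trans (ler_sum _ (fun i _ => floor_dist_ge _ _)).
rewrite sumrB sumr_const card_ord /l1dist mulr_sumr lerD2r.
by apply: ler_sum => i _; rewrite -mulrBr normrM ger0_norm.
Qed.

Lemma floor_scale_norm d (L : R) (v : 'I_d -> R) : 0 <= L ->
  (normz1 (floor_scale L v))%:R <= L * l1norm v + d%:R.
Proof.
move=> L0; rewrite /floor_scale natr_normz1 big_map big_enum /=.
apply: le_trans (ler_sum _ (fun i _ => floor_norm_le _)) _.
rewrite big_split sumr_const card_ord /l1norm mulr_sumr lerD2r /=.
by apply: ler_sum => i _; rewrite normrM ger0_norm.
Qed.

Section Packing.
Variables (d : nat) (delta : R) (S : seq {ffun 'I_d -> R}).
Hypotheses (delta0 : 0 < delta) (uniqS : uniq S)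
  (S_ball : forall s, s \in S -> l1norm s <= 1)
  (S_sep : forall s s', s \in S -> s' \in S -> s != s' -> delta <= l1dist s s').

(* Scale by [L ~ 2 X / delta] and round: the lattice balls of radius [X + d]
   around the rounded points are disjoint. *)
Lemma l1_packing_scaled (X : nat) :
  (size S)%:R * X%:R ^+ d <=
  ((1 + 2 / delta) * X%:R + (3 * d%:R / delta + 1 + 3 * d%:R)) ^+ d.
Proof.
set rho := (X + d)%N.
have B0 : 0 <= (2 * rho%:R + d%:R) / delta :> R.
  by rewrite divr_ge0 ?(ltW delta0) // addr_ge0 ?mulr_ge0.
set L := (Num.truncn ((2 * rho%:R + d%:R) / delta)).+1.
have /andP [_ hL1] := truncn_itv B0; rewrite -/L in hL1.
have hL2 : L%:R <= (2 * rho%:R + d%:R) / delta + 1.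
  by rewrite /L -addn1 natrD lerD2r; case/andP: (truncn_itv B0).
have L0 : 0 <= L%:R :> R by [].
rewrite -natrX -natrM; apply: le_trans (_ : ((L + d + rho + d)%N%:R ^+ d <= _)).
  rewrite -natrX ler_nat -(addnK d X) -/rho.
  apply: (@lattice_packing_expn _ S (fun s => floor_scale L%:R s)) => //.
  - by move=> s _; apply: size_floor_scale.
  - move=> s s' sS s'S ne.
    rewrite -(ltr_nat R) natrM; apply: lt_le_trans (floor_scale_dist _ _ L0).
    have := ler_wpM2l L0 (S_sep sS s'S ne); rewrite ltr_pdivrMr // in hL1; lra.
  - move=> s sS; rewrite leq_add2r -(ler_nat R) natrD.
    apply: le_trans (floor_scale_norm _ L0) _.
    by rewrite lerD2r ler_piMr // S_ball.
have hle : (L + d + rho + d)%N%:R <=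
    (1 + 2 / delta) * X%:R + (3 * d%:R / delta + 1 + 3 * d%:R) :> R.
  have e : (2 * (X%:R + d%:R) + d%:R) / delta = 2 / delta * X%:R + 3 * d%:R / delta.
    by field; rewrite gt_eqF.
  rewrite /rho !natrD e in hL2 *; lra.
by rewrite lerXn2r ?nnegrE // (le_trans _ hle).
Qed.

Lemma l1_packing : (size S)%:R <= (1 + 2 / delta) ^+ d.
Proof.
have idelta0 : 0 <= delta^-1 by rewrite invr_ge0 ltW.
apply: le_expr_of_affine_bound => [||X _]; last exact: l1_packing_scaled.
  by rewrite addr_ge0 ?mulr_ge0.
by rewrite !addr_ge0 ?mulr_ge0.
Qed.

End Packing.

End L1Packing.

Section OrderedNet.
Variables (R : realType) (d : nat).
Notation V := {ffun 'I_d -> R}.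
Implicit Types (u v y : 'I_d -> R) (S : seq V).

Lemma l1norm_ge0 v : 0 <= l1norm v.
Proof. exact: sumr_ge0. Qed.

Lemma l1distC u v : l1dist u v = l1dist v u.
Proof. by apply: eq_bigr => i _; rewrite distrC. Qed.

Lemma l1dist_triangle u v y : l1dist u y <= l1dist u v + l1dist v y.
Proof.
rewrite -big_split; apply: ler_sum => i _.
by apply: le_trans (ler_normD _ _); rewrite addrA subrK.
Qed.

Lemma l1dist_le_norm u v : l1dist u v <= l1norm u + l1norm v.
Proof. by rewrite -big_split; apply: ler_sum => i _; apply: ler_normB. Qed.

Lemma l1norm_le_dist u v : l1norm v <= l1norm u + l1dist u v.
Proof.
rewrite -big_split; apply: ler_sum => i _.
by rewrite {1}(_ : v i = u i - (u i - v i)) ?ler_normB // opprB addrC subrK.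
Qed.

Lemma l1dist_refl u : l1dist u u = 0.
Proof. by rewrite /l1dist big1 // => i _; rewrite subrr normr0. Qed.

Lemma l1norm0 : l1norm (0 : V) = 0.
Proof. by rewrite /l1norm big1 // => i _; rewrite ffunE normr0. Qed.

Definition unit_vec (i : 'I_d) : V := [ffun j => (j == i)%:R].

Lemma l1dist0 v : l1dist (0 : V) v = l1norm v.
Proof. by apply: eq_bigr => i _; rewrite ffunE sub0r normrN. Qed.

Lemma l1norm_unit_vec i : l1norm (unit_vec i) = 1.
Proof.
rewrite /l1norm (bigD1 i) //= big1 => [|j ji]; first by rewrite ffunE eqxx normr1 addr0.
by rewrite ffunE (negbTE ji) normr0.
Qed.

Lemma l1dist_unit_vec i j : i != j -> l1dist (unit_vec i) (unit_vec j) = 2.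
Proof.
move=> ij; rewrite /l1dist /unit_vec (bigD1 i) // (bigD1 j) 1?eq_sym //= big1 => [|k /andP [ki kj]].
  rewrite !ffunE !eqxx (negbTE ij) eq_sym (negbTE ij) subr0 normr1 sub0r normrN normr1 addr0.
  by [].
by rewrite !ffunE (negbTE ki) (negbTE kj) subrr normr0.
Qed.

Lemma unit_vec_inj : injective unit_vec.
Proof.
move=> i j /ffunP /(_ i); rewrite !ffunE eqxx.
by case: eqP => // _ /eqP; rewrite oner_eq0.
Qed.

Definition separated (delta : R) S : Prop :=
  [/\ uniq S, forall s, s \in S -> l1norm s <= 1 &
      forall s s', s \in S -> s' \in S -> s != s' -> delta <= l1dist s s'].

Definition dense_in_ball (delta : R) S : Prop :=
  forall y : V, l1norm y <= 1 -> exists2 s, s \in S & l1dist y s < delta.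

Definition l1_frame : seq V := 0 :: [seq unit_vec i | i <- enum 'I_d].

Lemma separated_frame delta : delta <= 1 -> separated delta l1_frame.
Proof.
move=> delta1; split.
- rewrite /= map_inj_uniq ?enum_uniq ?andbT; last exact: unit_vec_inj.
  apply/mapP => -[i _ /ffunP /(_ i)]; rewrite !ffunE eqxx => /eqP.
  by rewrite eq_sym oner_eq0.
- move=> s; rewrite inE => /predU1P [-> | /mapP [i _ ->]].
    by rewrite l1norm0 ler01.
  by rewrite l1norm_unit_vec.
- move=> s s'; rewrite !inE.
  move=> /predU1P [-> | /mapP [i _ ->]] /predU1P [-> | /mapP [j _ ->]];
    rewrite ?eqxx // => ne.
  + by rewrite l1dist0 l1norm_unit_vec.
  + by rewrite l1distC l1dist0 l1norm_unit_vec.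
  + rewrite l1dist_unit_vec; first lra.
    by apply: contraNneq ne => ->.
Qed.

Lemma separated_cons delta S (y : V) : 0 < delta -> separated delta S ->
  l1norm y <= 1 -> (forall s, s \in S -> delta <= l1dist y s) -> separated delta (y :: S).
Proof.
move=> delta0 [uS ballS sepS] y1 far; split.
- rewrite /= uS andbT; apply/negP => /far.
  by rewrite l1dist_refl leNgt delta0.
- by move=> s /predU1P [-> | /ballS].
- move=> s s' /predU1P [-> | sS] /predU1P [-> | s'S]; rewrite ?eqxx // => ne.
  + exact: far s'S.
  + by rewrite l1distC far.
  + exact: sepS sS s'S ne.
Qed.

(* Greedy extension: add far points while the packing bound leaves room. *)
Lemma separated_extend_dense (delta : R) (K : nat) S0 : 0 < delta ->
  (forall S, separated delta S -> (size S <= K)%N) -> separated delta S0 ->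
  exists S, [/\ separated delta S, {subset S0 <= S} & dense_in_ball delta S].
Proof.
move=> delta0 hK; have [k] := ubnP (K - size S0).
elim: k S0 => // k IH S0 hk hS0.
have [[y [y1 far]] | near] :=
  pselect (exists y : V, l1norm y <= 1 /\ forall s, s \in S0 -> delta <= l1dist y s).
  have hS1 := separated_cons delta0 hS0 y1 far.
  have hk1 : (K - size (y :: S0) < k)%N by have := hK _ hS1; rewrite /=; lia.
  have [S [hS sub dense]] := IH _ hk1 hS1.
  by exists S; split => // s sS; apply: sub; rewrite inE sS orbT.
exists S0; split => // y y1; apply: contra_notP near => hno.
exists y; split => // s sS; rewrite leNgt; apply/negP => hlt.
by apply: hno; exists s.
Qed.

Lemma l1_shrink (delta : R) y : 0 < delta <= l1norm y ->
  exists y' : V, l1norm y' = l1norm y - delta /\ l1dist y y' = delta.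
Proof.
move=> /andP [delta0 hy]; have y0 : l1norm y != 0 by rewrite gt_eqF // (lt_le_trans delta0).
set c := 1 - delta / l1norm y.
have c0 : 0 <= c by rewrite subr_ge0 ler_pdivrMr ?mul1r // (lt_le_trans delta0).
have c1 : 0 <= 1 - c by rewrite /c opprB addrC subrK divr_ge0 ?l1norm_ge0 ?ltW.
exists [ffun i => c * y i]; split.
  rewrite /l1norm (eq_bigr (fun i => c * `|y i|)) => [|i _]; last first.
    by rewrite ffunE normrM ger0_norm.
  by rewrite -mulr_sumr /c mulrBl mul1r divfK.
rewrite /l1dist (eq_bigr (fun i => (1 - c) * `|y i|)) => [|i _]; last first.
  by rewrite ffunE -{1}[y i]mul1r -mulrBl normrM ger0_norm.
by rewrite -mulr_sumr /c opprB addrC subrK divfK.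
Qed.

(* Move [y] by [delta] towards [0], then approximate. *)
Lemma dense_in_ball_below (delta : R) S y : 0 < delta -> dense_in_ball delta S ->
  delta <= l1norm y <= 1 -> exists2 s, s \in S & l1norm s < l1norm y /\ l1dist y s < 2 * delta.
Proof.
move=> delta0 dense /andP [y_ge y_le1].
have [y' [ny' dyy']] : exists y' : V, l1norm y' = l1norm y - delta /\ l1dist y y' = delta.
  by apply: l1_shrink; rewrite delta0.
have [|s sS ds] := dense y'; first by rewrite ny'; lra.
exists s => //; split; first by have := l1norm_le_dist y' s; lra.
by apply: le_lt_trans (l1dist_triangle y y' s) _; lra.
Qed.

Lemma sorted_nth_le (T : eqType) (F : T -> R) (s : seq T) x0 x l :
  sorted (fun a b => F a <= F b) s -> x \in s -> (l <= index x s)%N -> F (nth x0 s l) <= F x.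
Proof.
move=> ss xs lx; have F_trans : transitive (fun a b => F a <= F b).
  by move=> b a c; apply: le_trans.
have := sorted_leq_nth F_trans (fun a => lexx (F a)) x0 ss l (index x s).
by rewrite nth_index // !inE index_mem xs (leq_ltn_trans lx) ?index_mem //; apply.
Qed.

Definition ordered_net (eps : R) (K : nat) (p : 'I_K -> V) : Prop :=
  [/\ forall l, l1norm (p l) <= 1,
      forall i, exists l, p l = unit_vec i &
      forall l y, l1norm y <= l1norm (p l) ->
        exists2 l' : 'I_K, (l' <= l)%N & l1dist y (p l') <= eps].

Lemma ordered_net_of_dense (delta : R) (K : nat) S : 0 < delta ->
  separated delta S -> {subset l1_frame <= S} -> (size S <= K)%N ->
  dense_in_ball delta S -> exists p : 'I_K -> V, ordered_net (2 * delta) p.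
Proof.
move=> delta0 [uS ballS _] frameS SK dense.
set T := sort (fun x y : V => l1norm x <= l1norm y) S.
have memT : T =i S := mem_sort _ _.
have sT : sorted (fun x y : V => l1norm x <= l1norm y) T.
  by apply: sort_sorted => x y; apply: le_total.
have TK : (size T <= K)%N by rewrite size_sort.
have T0 : 0 \in T by rewrite memT frameS ?mem_head.
have index_lt_K x : x \in T -> (index x T < K)%N.
  by move=> xT; rewrite (leq_trans _ TK) ?index_mem.
pose p (l : 'I_K) := nth 0 T l.
have p_ball l : l1norm (p l) <= 1.
  have [lT|Tl] := ltnP l (size T); first by rewrite ballS // -memT mem_nth.
  by rewrite /p nth_default // l1norm0 ler01.
exists p; split => // [i|l y hy].
  have iT : unit_vec i \in T by rewrite memT frameS // inE map_f ?orbT ?mem_enum.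
  by exists (Ordinal (index_lt_K _ iT)); rewrite /p nth_index.
have [small|large] := ltP (l1norm y) delta.
  have K0 : (0 < K)%N := leq_ltn_trans (leq0n _) (index_lt_K _ T0).
  exists (Ordinal K0) => //; apply: le_trans (l1dist_le_norm _ _) _.
  have := sorted_nth_le 0 sT T0 (leq0n _); rewrite l1norm0 -/(p (Ordinal K0)) => p0.
  have := l1norm_ge0 (p (Ordinal K0)); lra.
have [|s sS [s_lt ds]] := dense_in_ball_below delta0 dense (y := y).
  by rewrite large /=; apply: le_trans hy (p_ball l).
have sT' : s \in T by rewrite memT.
exists (Ordinal (index_lt_K _ sT')); last by rewrite /p nth_index //; apply: ltW.
rewrite /= leqNgt; apply/negP => ls.
have := sorted_nth_le 0 sT sT' (ltnW ls); rewrite -/(p l); lra.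
Qed.

Lemma ordered_net_exists (eps : R) : 0 < eps -> eps <= 2 ->
  exists p : 'I_(Num.truncn ((1 + 4 / eps) ^+ d)) -> V, ordered_net eps p.
Proof.
move=> eps0 eps2; set K := Num.truncn _.
have delta0 : 0 < eps / 2 by lra.
have hK S : separated (eps / 2) S -> (size S <= K)%N.
  case=> uS ballS sepS; rewrite /K truncn_ge_nat; last first.
    by rewrite exprn_ge0 // addr_ge0 // divr_ge0 ?(ltW eps0).
  have -> : 4 / eps = 2 / (eps / 2) by field; rewrite gt_eqF.
  exact: l1_packing.
have delta1 : eps / 2 <= 1 by lra.
have [S [sepS frameS dense]] := separated_extend_dense delta0 hK (separated_frame delta1).
have [p hp] := ordered_net_of_dense delta0 sepS frameS (hK _ sepS) dense.
by exists p; rewrite -[eps](@divfK _ 2) ?pnatr_eq0 // mulrC.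
Qed.

End OrderedNet.

Arguments unit_vec {R d}.

(** * Isometric embeddings between l_infty spaces *)

Section Embeddings.
Variable R : realType.

Lemma supnorm_ge_coord (k : nat) (x : 'rV[R]_k) i : `|x 0 i| <= supnorm x.
Proof. exact: le_bigmax. Qed.

Lemma supnorm_le (k : nat) (x : 'rV[R]_k) (c : R) :
  0 <= c -> (forall i, `|x 0 i| <= c) -> supnorm x <= c.
Proof. by move=> c0 h; apply: bigmax_le. Qed.

Lemma supnorm_ge0 (k : nat) (x : 'rV[R]_k) : 0 <= supnorm x.
Proof. exact: bigmax_ge_id. Qed.

Lemma supnorm_mulmx_le (a b : nat) (x : 'rV[R]_a) (A : 'M[R]_(a, b)) (c : R) :
  0 <= c -> (forall j, l1norm (A^~ j) <= c) -> supnorm (x *m A) <= supnorm x * c.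
Proof.
move=> c0 hA; apply: supnorm_le => [|j]; first by rewrite mulr_ge0 ?supnorm_ge0.
rewrite mxE; apply: le_trans (ler_norm_sum _ _ _) _.
apply: le_trans (_ : \sum_i supnorm x * `|A i j| <= _).
  by apply: ler_sum => i _; rewrite normrM ler_wpM2r ?supnorm_ge_coord.
by rewrite -mulr_sumr ler_wpM2l ?supnorm_ge0 ?hA.
Qed.

Definition signed_unit_col (a b : nat) (A : 'M[R]_(a, b)) (i : 'I_a) : Prop :=
  exists j : 'I_b, exists s : bool, forall i', A i' j = (-1) ^+ s * (i' == i)%:R.

Lemma isEmb_of_cols (a b : nat) (A : 'M[R]_(a, b)) :
  (forall j, l1norm (A^~ j) <= 1) -> (forall i, signed_unit_col A i) -> isEmb A.
Proof.
move=> hA hunit x; apply/le_anti; rewrite -{1}[supnorm x]mulr1 supnorm_mulmx_le //=.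
apply: supnorm_le => [|i]; first exact: supnorm_ge0.
have [j [s hj]] := hunit i; apply: le_trans (supnorm_ge_coord _ j).
rewrite mxE (bigD1 i) //= big1 => [|i' i'i]; last by rewrite hj (negbTE i'i) !mulr0.
by rewrite hj eqxx mulr1 addr0 normrM normr_sign mulr1.
Qed.

Lemma isEmb_col_l1 (a b : nat) (A : 'M[R]_(a, b)) j : isEmb A -> l1norm (A^~ j) <= 1.
Proof.
move=> hA; pose x : 'rV[R]_a := \row_i (if 0 <= A i j then 1 else -1).
have x1 : supnorm x <= 1.
  by apply: supnorm_le => // i; rewrite mxE; case: ifP; rewrite ?normrN normr1.
rewrite -(hA x) in x1; apply: le_trans x1; apply: le_trans (supnorm_ge_coord _ j).
rewrite mxE; apply: le_trans (ler_norm _); rewrite le_eqVlt; apply/orP; left.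
apply/eqP/eq_bigr => i _; rewrite mxE; case: ifP => [A0 | /negbT].
  by rewrite mul1r ger0_norm.
by rewrite -ltNge => A0; rewrite mulN1r ltr0_norm.
Qed.

Lemma l1norm_le1_signed_unit (a : nat) (v : 'I_a -> R) i :
  l1norm v <= 1 -> 1 <= `|v i| -> forall i', v i' = (-1) ^+ (v i < 0)%R * (i' == i)%:R.
Proof.
rewrite /l1norm (bigD1 i) //=; set rest := \sum_(i' | _) _ => hv vi.
have rest0 : rest = 0 by apply/le_anti; rewrite sumr_ge0 // andbT; lra.
move=> i'; have [-> | i'i] := eqVneq i' i.
  rewrite /= mulr1n {1}[v i]realEsign ?num_real //; congr (_ * _).
  by apply/le_anti; rewrite vi andbT; lra.
rewrite /= mulr0n mulr0; apply/normr0_eq0/le_anti; rewrite normr_ge0 andbT -rest0.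
by rewrite /rest (bigD1 i') //= lerDl sumr_ge0.
Qed.

Lemma isEmb_signed_unit_col (a b : nat) (A : 'M[R]_(a, b)) i :
  isEmb A -> signed_unit_col A i.
Proof.
move=> hA; pose x : 'rV[R]_a := \row_i' (i' == i)%:R.
have x1 : supnorm x = 1.
  apply/le_anti; rewrite (le_trans _ (supnorm_ge_coord x i)) ?mxE ?eqxx ?normr1 //.
  by rewrite andbT; apply: supnorm_le => // i'; rewrite mxE; case: eqP; rewrite ?normr1 ?normr0.
have xA j : (x *m A) 0 j = A i j.
  rewrite mxE (bigD1 i) //= big1 => [|i' i'i]; first by rewrite mxE eqxx mul1r addr0.
  by rewrite mxE (negbTE i'i) mul0r.
have [j Aij] : exists j, 1 <= `|A i j|.
  apply/existsP; apply: contraT => /existsPn hno.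
  suff : supnorm (x *m A) < 1 by rewrite hA x1 ltxx.
  by apply: bigmax_lt => // j _; rewrite xA ltNge hno.
exists j, (A i j < 0)%R; exact: l1norm_le1_signed_unit (isEmb_col_l1 j hA) Aij.
Qed.

Lemma isEmb_mul (a b c : nat) (A : 'M[R]_(a, b)) (B : 'M[R]_(b, c)) :
  isEmb A -> isEmb B -> isEmb (A *m B).
Proof. by move=> hA hB x; rewrite mulmxA hB hA. Qed.

Lemma opnorm_le (a b : nat) (D : 'M[R]_(a, b)) (eps : R) :
  0 <= eps -> (forall j, l1norm (D^~ j) <= eps) -> opnorm D <= eps.
Proof.
move=> eps0 hD; apply: ge_sup => [|_ [x x1 <-]].
  exists (supnorm ((0 : 'rV[R]_a) *m D)), 0 => //=.
  by apply: supnorm_le => // i; rewrite mxE normr0.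
apply: le_trans (supnorm_mulmx_le _ eps0 hD) _.
by rewrite -{2}[eps]mul1r ler_wpM2r.
Qed.

Lemma isEmb_colsub (a b n : nat) (A : 'M[R]_(a, b)) (g : 'I_n -> 'I_b) :
  isEmb A -> (forall t, exists j, g j = t) -> isEmb (colsub g A).
Proof.
move=> hA g_onto; apply: isEmb_of_cols => [j|i].
  by rewrite /l1norm; under eq_bigr do rewrite mxE; exact: isEmb_col_l1.
have [t [s ht]] := isEmb_signed_unit_col i hA; have [j gj] := g_onto t.
by exists j, s => i'; rewrite mxE gj ht.
Qed.

Lemma l1norm_mulmx_col_le (a b c : nat) (A : 'M[R]_(a, b)) (B : 'M[R]_(b, c)) t :
  (forall k, l1norm (A^~ k) <= 1) -> l1norm ((A *m B)^~ t) <= l1norm (B^~ t).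
Proof.
move=> hA; apply: le_trans (_ : \sum_i \sum_k `|A i k| * `|B k t| <= _).
  apply: ler_sum => i _; rewrite mxE; apply: le_trans (ler_norm_sum _ _ _) _.
  by apply: ler_sum => k _; rewrite normrM.
rewrite exchange_big; apply: ler_sum => k _ /=.
by rewrite -mulr_suml ler_piMl ?hA.
Qed.

Lemma isEmb_pid_mx (a b : nat) : (a <= b)%N -> isEmb (pid_mx a : 'M[R]_(a, b)).
Proof.
move=> ab; apply: isEmb_of_cols => [j|i]; last first.
  by exists (widen_ord ab i), false => i'; rewrite mxE ltn_ord andbT mul1r.
rewrite /l1norm; case: (ltnP j a) => [ja | aj].
  rewrite (bigD1 (Ordinal ja)) //= big1 => [|i ij]; first by rewrite !mxE eqxx ja normr1 addr0.
  rewrite mxE (_ : (i == j :> nat) = false) ?normr0 //.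
  by apply: contraNF ij => /eqP ij; apply/eqP/val_inj.
rewrite big1 ?ler01 // => i _; rewrite mxE (_ : (i == j :> nat) = false) ?normr0 //.
by apply/negbTE; rewrite neq_ltn (leq_trans (ltn_ord i) aj).
Qed.

Lemma l1norm_colB (a b : nat) (A B : 'M[R]_(a, b)) j :
  l1norm ((A - B)^~ j) = l1dist (A^~ j) (B^~ j).
Proof. by apply: eq_bigr => i _; rewrite !mxE. Qed.

(* Any two embeddings are [2]-close. *)
Lemma EmbRamsey_trivial d m r (eps : R) n : (d <= m)%N -> (m <= n)%N -> 2 <= eps ->
  EmbRamsey d m r eps n.
Proof.
move=> dm mn eps2 c hc.
have gamma_emb := isEmb_pid_mx mn; set gamma := pid_mx m in gamma_emb.
have phi0_emb := isEmb_mul (isEmb_pid_mx dm) gamma_emb.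
exists gamma => //; exists (c (pid_mx d *m gamma)); first exact: hc.
move=> phi phi_emb; exists (pid_mx d *m gamma) => //.
apply: opnorm_le => [|j]; first lra.
rewrite l1norm_colB; apply: le_trans (l1dist_le_norm _ _) _.
have := isEmb_col_l1 j (isEmb_mul phi_emb gamma_emb); have := isEmb_col_l1 j phi0_emb; lra.
Qed.

End Embeddings.

(** * From rigid surjections to embeddings *)

Section SignedPatterns.
Variables (R : realType) (d m : nat).

Local Notation pattern := ({ffun 'I_d -> 'I_m} * {ffun 'I_d -> bool})%type.

Definition patterns : {set pattern} := [set x : pattern | injectiveb x.1].

Lemma card_patterns : (d <= m)%N -> #|patterns| = (2 ^ d * (m`! %/ (m - d)`!))%N.
Proof.
move=> dm; rewrite -ffact_factd //.
have -> : patterns =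
    finset.setX [set f : {ffun 'I_d -> 'I_m} | injectiveb f] [set: {ffun 'I_d -> bool}].
  by apply/setP => x; rewrite !inE andbT.
by rewrite cardsX card_inj_ffuns cardsT card_ffun !card_ord card_bool mulnC.
Qed.

Definition scatter (x : pattern) (v : 'I_d -> R) (k : 'I_m) : R :=
  \sum_i (x.1 i == k)%:R * (-1) ^+ x.2 i * v i.

Lemma sum_delta (k0 : 'I_m) (F : 'I_m -> R) : \sum_k (k0 == k)%:R * F k = F k0.
Proof.
rewrite (bigD1 k0) //= eqxx mul1r big1 ?addr0 // => k k0k.
by rewrite eq_sym (negbTE k0k) mul0r.
Qed.

Lemma l1norm_scatter_le x v : l1norm (scatter x v) <= l1norm v.
Proof.
apply: le_trans (_ : \sum_k \sum_i (x.1 i == k)%:R * `|v i| <= _).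
  apply: ler_sum => k _; apply: le_trans (ler_norm_sum _ _ _) _.
  by apply: ler_sum => i _; rewrite !normrM normr_sign mulr1 ger0_norm.
by rewrite exchange_big; apply: ler_sum => i _; rewrite sum_delta.
Qed.

Lemma scatter_unit_vec x i0 k : scatter x (unit_vec i0) k = (x.1 i0 == k)%:R * (-1) ^+ x.2 i0.
Proof.
rewrite /scatter (bigD1 i0) //= big1 => [|i ii0]; first by rewrite ffunE eqxx mulr1 addr0.
by rewrite ffunE (negbTE ii0) mulr0.
Qed.

Definition inverts_pattern (phi : 'M[R]_(d, m)) (x : pattern) : Prop :=
  forall i i', phi i' (x.1 i) = (-1) ^+ x.2 i * (i' == i)%:R.

Lemma scatter_inverse phi x v : inverts_pattern phi x ->
  forall i', \sum_k phi i' k * scatter x v k = v i'.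
Proof.
move=> hphi i'.
transitivity (\sum_i \sum_k (x.1 i == k)%:R * (phi i' k * ((-1) ^+ x.2 i * v i))).
  rewrite exchange_big; apply: eq_bigr => k _; rewrite /scatter mulr_sumr.
  by apply: eq_bigr => i _; ring.
under eq_bigr do rewrite sum_delta.
rewrite (bigD1 i') //= big1 => [|i ii']; last by rewrite hphi eq_sym (negbTE ii') mulr0 mul0r.
by rewrite hphi eqxx mulr1 mulrA -signr_addb addbb mul1r addr0.
Qed.

Lemma emb_inverts_pattern (phi : 'M[R]_(d, m)) : isEmb phi ->
  exists2 x, x \in patterns & inverts_pattern phi x.
Proof.
move=> phi_emb.
have [F hF] := fin_all_exists (fun i => isEmb_signed_unit_col i phi_emb).
have [S hS] := fin_all_exists (fun i => hF i).
pose x : pattern := ([ffun i => F i], [ffun i => S i]).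
have hx : inverts_pattern phi x by move=> i i'; rewrite !ffunE hS.
exists x => //; rewrite inE; apply/injectiveP => i j; rewrite /= !ffunE => eij.
have := hS j i; rewrite -eij hS eqxx mulr1.
by case: eqP => // _ /eqP; rewrite mulr0 signr_eq0.
Qed.

End SignedPatterns.

Section NetTransfer.
Variables (R : realType) (d m K : nat) (eps : R) (p : 'I_K -> {ffun 'I_d -> R}).
Hypotheses (d_gt0 : (0 < d)%N) (dm : (d <= m)%N) (eps_ge0 : 0 <= eps)
  (p_net : ordered_net eps p).

Local Notation P := (2 ^ d * (m`! %/ (m - d)`!))%N.
Local Notation pattern := ({ffun 'I_d -> 'I_m} * {ffun 'I_d -> bool})%type.

Definition pattern_of (pi : 'I_P) : pattern :=
  enum_val (cast_ord (esym (card_patterns dm)) pi).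

Lemma pattern_of_onto x : x \in patterns d m -> exists pi, pattern_of pi = x.
Proof.
move=> xP; exists (cast_ord (card_patterns dm) (enum_rank_in xP x)).
by rewrite /pattern_of cast_ordK enum_rankK_in.
Qed.

Definition net_mx : 'M[R]_(d, K) := \matrix_(i, l) p l i.

Definition scatter_mx : 'M[R]_(m, K * P) :=
  \matrix_(k, t) scatter (pattern_of (offset t)) (p (block t)) k.

Lemma isEmb_net_mx : isEmb net_mx.
Proof.
case: p_net => p_ball p_unit _; apply: isEmb_of_cols => [l|i].
  by rewrite /l1norm; under eq_bigr do rewrite mxE; exact: p_ball.
have [l pl] := p_unit i; exists l, false => i'.
by rewrite mxE pl ffunE expr0 mul1r.
Qed.

Lemma isEmb_scatter_mx : isEmb scatter_mx.
Proof.
case: p_net => p_ball p_unit _; apply: isEmb_of_cols => [t|k].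
  rewrite /l1norm; under eq_bigr do rewrite mxE.
  exact: le_trans (l1norm_scatter_le _ _) (p_ball _).
pose i0 : 'I_d := Ordinal d_gt0.
pose sigma : {ffun 'I_d -> 'I_m} := [ffun i => tperm (widen_ord dm i0) k (widen_ord dm i)].
have sigmaP : (sigma, [ffun=> false]) \in patterns d m.
  rewrite inE; apply/injectiveP => i j; rewrite !ffunE => /perm_inj /(congr1 val) ij.
  exact: val_inj.
have [pi hpi] := pattern_of_onto sigmaP; have [l pl] := p_unit i0.
exists (in_block l pi), false => k'.
rewrite mxE block_in_block offset_in_block hpi pl scatter_unit_vec !ffunE tpermL.
by rewrite expr0 !mul1r mulr1 eq_sym.
Qed.

Lemma emb_approx (phi : 'M[R]_(d, m)) : isEmb phi ->
  exists2 f : {ffun 'I_(K * P) -> 'I_K}, rigid_surj f &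
    forall t, l1dist ((phi *m scatter_mx)^~ t) (p (f t)) <= eps.
Proof.
move=> phi_emb; case: p_net => _ _ p_approx.
have [x xP hx] := emb_inverts_pattern phi_emb; have [pi0 hpi0] := pattern_of_onto xP.
have col_le t : l1norm ((phi *m scatter_mx)^~ t) <= l1norm (p (block t)).
  apply: le_trans (l1norm_mulmx_col_le _ _ (fun k => isEmb_col_l1 k phi_emb)) _.
  by rewrite /l1norm; under eq_bigr do rewrite mxE; exact: l1norm_scatter_le.
have col_inverted t : offset t = pi0 -> (phi *m scatter_mx)^~ t =1 p (block t).
  move=> tpi0 i'; rewrite mxE; under eq_bigr do rewrite mxE tpi0 hpi0.
  exact: (scatter_inverse (p (block t)) hx i').
have /fin_all_exists [F hF] : forall t, exists l : 'I_K, [/\ (l <= block t)%N,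
    l1dist ((phi *m scatter_mx)^~ t) (p l) <= eps & offset t = pi0 -> l = block t].
  move=> t; have [tpi0 | tpi0] := eqVneq (offset t) pi0.
    exists (block t); split => //; rewrite /l1dist big1 // => i _.
    by rewrite col_inverted // subrr normr0.
  have [l' l't dist] := p_approx (block t) _ (col_le t).
  by exists l'; split => // /eqP; rewrite (negbTE tpi0).
exists [ffun t => F t] => [|t]; last by rewrite ffunE; case: (hF t).
apply: rigid_surj_of_blocks => [t|l]; first by rewrite ffunE; case: (hF t).
exists pi0; rewrite ffunE; case: (hF (in_block l pi0)) => _ _ ->.
  exact: block_in_block.
exact: offset_in_block.
Qed.

Lemma EmbRamsey_of_GRprop r N : GRprop K (K * P) r N -> EmbRamsey d m r eps N.
Proof.
move=> hGR c hc.
have net_emb (f : {ffun 'I_N -> 'I_K}) : rigid_surj f -> isEmb (colsub f net_mx).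
  by case=> f_onto _; apply: isEmb_colsub isEmb_net_mx f_onto.
have [gamma gamma_rigid [col hcol]] :=
  hGR (fun f => c (colsub f net_mx)) (fun f hf => hc _ (net_emb f hf)).
have compf_emb f : rigid_surj f -> isEmb (colsub (compf f gamma) net_mx).
  by move=> hf; apply: isEmb_colsub isEmb_net_mx (compf_surj hf gamma_rigid).
exists (colsub gamma scatter_mx).
  by case: gamma_rigid => gamma_onto _; apply: isEmb_colsub isEmb_scatter_mx gamma_onto.
exists col.
  have [f0 f0_rigid _] := emb_approx (isEmb_pid_mx dm).
  by rewrite -(hcol f0 f0_rigid); apply/hc/compf_emb.
move=> phi phi_emb; have [f f_rigid f_approx] := emb_approx phi_emb.
exists (colsub (compf f gamma) net_mx); first by split; [exact: compf_emb | exact: hcol].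
apply: opnorm_le => // j; rewrite mulmx_colsub l1norm_colB.
set PS := phi *m scatter_mx in f_approx *; clearbody PS.
by rewrite /l1dist; under eq_bigr do rewrite !mxE ffunE; exact: f_approx.
Qed.

End NetTransfer.

Unset Implicit Arguments.

Theorem theorem6p27 (R : realType) (d m r : nat) (eps : R) :
  (0 < d)%N -> (d <= m)%N -> (0 < r)%N -> 0 < eps ->
  let k := Num.truncn ((1 + 4 / eps) ^+ d) in
  forall N : nat, isGR k (k * 2 ^ d * (m`! %/ (m - d)`!)) r N ->
  exists2 n : nat, (n <= N)%N & EmbRamsey d m r eps n.
Proof.
move=> d_gt0 dm r_gt0 eps_gt0 k N [hGR _]; exists N => //.
have [eps_le2 | eps_gt2] := lerP eps 2.
  have [p p_net] := ordered_net_exists d eps_gt0 eps_le2.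
  by apply: (EmbRamsey_of_GRprop d_gt0 dm (ltW eps_gt0) p_net); rewrite mulnA.
apply: EmbRamsey_trivial (ltW eps_gt2) => //.
apply: leq_trans (GRprop_size_le r_gt0 hGR).
have k_gt0 : (0 < k)%N.
  by rewrite truncn_gt0 exprn_ege1 // lerDl divr_ge0 // ltW.
have m_le : (m <= m`! %/ (m - d)`!)%N.
  by rewrite -ffact_factd // -(prednK d_gt0) ffactnS leq_pmulr // ffact_gt0; lia.
by apply: leq_trans m_le _; rewrite leq_pmull // muln_gt0 k_gt0 expn_gt0.
Qed.
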